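(* Let $k\in\mathbb{N}$, $m=\lfloor\sqrt{k}\rfloor$, and let $G_k$ be the graph described in the context, with the geodesic-biased random walk with target $b$ and excited set $\{a\}$. Write $v_{m+1}:=b$ and $T(x,y)$ for the expected first hitting time of $y$ by this walk started at $x$. Then for every $1\le j\le m+1$, \[T(a,v_j)\ \ge\ \frac{k^{j-1}}{4^{j-1}\,(j-1)!}.\] In particular $T(a,b)\ge k^m/(4^m m!)$.
   Context: Geodesic-biased random walk: let $G$ be a finite connected graph, $b\in V(G)$ a target vertex and $\mathcal{X}\subseteq V(G)$ a set of excited vertices. For every vertex $x\neq b$ fix in advance one shortest path in $G$ from $x$ to $b$. From an unexcited vertex the walker moves to a uniformly random neighbour; from an excited vertex she moves to the next vertex on the fixed shortest path to $b$. The graph $G_k$ ($k\in\mathbb{N}$, $m=\lfloor\sqrt k\rfloor$): start with a path $a,v_1,v_2,\dots,v_m,b$ (of length $m+1$); then for each $i\in[m]$ add $k$ new paths from $a$ to $v_i$, each of length $i+1$ (i.e. each with $i$ new internal vertices), all these $km$ added paths being internally vertex-disjoint from each other and from the original path. In $G_k$ the unique shortest path from $a$ to $b$ is $a,v_1,\dots,v_m,b$, so from the excited vertex $a$ the walker always moves to $v_1$. *)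

From Stdlib Require Import Reals Arith List.
Import ListNotations.
Open Scope R_scope.

(* Vertices of G_k:
   VA = a, VB = b, VP i = v_i (1 <= i <= m),
   VI i c t = t-th internal vertex (1 <= t <= i) of the c-th added path
              (1 <= c <= k) from a to v_i. *)
Inductive V : Type := VA | VB | VP (i : nat) | VI (i c t : nat).

Definition V_eq_dec : forall x y : V, {x = y} + {x <> y}.
Proof. decide equality; apply Nat.eq_dec. Defined.

Definition V_eqb (x y : V) : bool := if V_eq_dec x y then true else false.

Definition msq (k : nat) : nat := Nat.sqrt k.

(* nodes of the original path a = p_0, v_1 = p_1, ..., v_m = p_m, b = p_(m+1) *)
Definition pnode (k i : nat) : V :=
  if Nat.eqb i 0 then VA else if Nat.eqb i (msq k + 1) then VB else VP i.

(* nodes of the c-th added path from a to v_i: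
   a = q_0, q_1, ..., q_i (internal), v_i = q_(i+1) *)
Definition qnode (i c t : nat) : V :=
  if Nat.eqb t 0 then VA else if Nat.eqb t (i + 1) then VP i else VI i c t.

Definition verts (k : nat) : list V :=
  VA :: VB :: map VP (seq 1 (msq k)) ++
  flat_map (fun i => flat_map (fun c => map (VI i c) (seq 1 i)) (seq 1 k))
           (seq 1 (msq k)).

Definition edges (k : nat) : list (V * V) :=
  map (fun i => (pnode k i, pnode k (S i))) (seq 0 (msq k + 1)) ++
  flat_map (fun i => flat_map (fun c =>
      map (fun t => (qnode i c t, qnode i c (S t))) (seq 0 (i + 1)))
      (seq 1 k)) (seq 1 (msq k)).

Definition adj (k : nat) (x y : V) : bool :=
  existsb (fun e => orb (andb (V_eqb (fst e) x) (V_eqb (snd e) y))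
                    (andb (V_eqb (fst e) y) (V_eqb (snd e) x))) (edges k).

Definition nbrs (k : nat) (x : V) : list V := filter (adj k x) (verts k).

(* Transition probabilities of the geodesic-biased walk on G_k with target b
   and excited set {a}: from a the walker moves to the next vertex on the
   (unique) shortest path a, v_1, ..., v_m, b, i.e. to pnode k 1; from any
   other vertex she moves to a uniformly random neighbour. *)
Definition P (k : nat) (x y : V) : R :=
  if V_eq_dec x VA then (if V_eq_dec y (pnode k 1) then 1 else 0)
  else if adj k x y then / INR (length (nbrs k x)) else 0.

Definition sumV (k : nat) (f : V -> R) : R :=
  fold_right Rplus 0 (map f (verts k)).

(* qdist k s y n x = Prob(X_n = x and X_t <> y for all 0 <= t <= n),
   for the walk started at X_0 = s. *)
Fixpoint qdist (k : nat) (s y : V) (n : nat) : V -> R :=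
  match n with
  | O => fun x => if V_eq_dec s y then 0 else if V_eq_dec x s then 1 else 0
  | S n' => fun z => if V_eq_dec z y then 0
                     else sumV k (fun x => qdist k s y n' x * P k x z)
  end.

(* Prob(tau_y > n), tau_y = first n >= 0 with X_n = y *)
Definition survival (k : nat) (s y : V) (n : nat) : R := sumV k (qdist k s y n).

(* ExpHit k s y T : T is the expected first hitting time T(s,y),
   E[tau_y] = sum_{n >= 0} Prob(tau_y > n) (the series converges to T). *)
Definition ExpHit (k : nat) (s y : V) (T : R) : Prop :=
  infinite_sum (survival k s y) T.

Example adj_test1 : adj 4 VA (VP 1) = true. Proof. reflexivity. Qed.
Example adj_test2 : adj 4 (VP 2) VB = true. Proof. reflexivity. Qed.
Example adj_test3 : adj 4 (VI 2 3 2) (VP 2) = true. Proof. reflexivity. Qed.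
Example adj_test4 : adj 4 VA (VI 2 4 1) = true. Proof. reflexivity. Qed.
Example deg_test : length (nbrs 4 VA) = (1 + 4 * 2)%nat. Proof. reflexivity. Qed.
Example deg_test2 : length (nbrs 4 (VP 2)) = (2 + 4)%nat. Proof. reflexivity. Qed.
Example adj_test5 : adj 0 VA VB = true. Proof. reflexivity. Qed.

(* Before it hits v_j the walk never enters an added path ending at some v_i
   with i >= j: the excited vertex a always steps to v_1, so such a path could
   only be entered from v_i itself.  First-step analysis therefore shows that
   T(a, v_j) = d_j, where d_0 = 0, d_1 = 1 and
     d_(i+1) = 2 d_i - d_(i-1) + (k + 2) + k i + k d_i / (i + 1):
   at v_i the walker enters each of the k added paths to v_i with probability
   1/(k+2), and such a path is a gambler's-ruin segment of length i + 1 that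
   brings her back to v_i with probability i/(i+1).  Dropping the nonnegative
   terms gives d_(i+1) >= k d_i / (i+1), hence d_j >= k^(j-1)/j!, and
   j! <= 4^(j-1) (j-1)!.

   Formally, T(a, v_j) is bounded above and below by the values at a of a
   supersolution and a subsolution of the equation g = 1 + P g off v_j; both
   values are d_j, and the supersolution also shows that the series defining
   T(a, v_j) converges. *)

From Stdlib Require Import Reals Arith List Lra Lia.
Open Scope R_scope.

Definition lsum {A} (l : list A) (f : A -> R) : R := fold_right Rplus 0 (map f l).

Lemma lsum_cons {A} (a : A) (l : list A) (f : A -> R) : lsum (a :: l) f = f a + lsum l f.
Proof. reflexivity. Qed.

Lemma lsum_app {A} (l1 l2 : list A) (f : A -> R) : lsum (l1 ++ l2) f = lsum l1 f + lsum l2 f.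
Proof. induction l1 as [|a l1 IH]; cbn [app]; [unfold lsum at 2|rewrite !lsum_cons, IH]; simpl; lra. Qed.

Lemma lsum_map {A B} (h : B -> A) (l : list B) (f : A -> R) : lsum (map h l) f = lsum l (fun x => f (h x)).
Proof. unfold lsum; now rewrite map_map. Qed.

Lemma lsum_flat_map {A B} (h : B -> list A) (l : list B) (f : A -> R) :
  lsum (flat_map h l) f = lsum l (fun x => lsum (h x) f).
Proof.
  induction l as [|b l IH]; [reflexivity|].
  cbn [flat_map]; rewrite lsum_app, IH; reflexivity.
Qed.

Lemma lsum_ext_in {A} (l : list A) (f g : A -> R) : (forall x, In x l -> f x = g x) -> lsum l f = lsum l g.
Proof.
  induction l as [|a l IHl]; intros H; auto.
  rewrite !lsum_cons, (H a) by now left.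
  rewrite IHl; [reflexivity|]; intros x Hx; apply H; now right.
Qed.

Lemma lsum_add {A} (l : list A) (f g : A -> R) : lsum l (fun x => f x + g x) = lsum l f + lsum l g.
Proof. induction l as [|a l IH]; [unfold lsum|rewrite !lsum_cons, IH]; simpl; lra. Qed.

Lemma lsum_sub {A} (l : list A) (f g : A -> R) : lsum l (fun x => f x - g x) = lsum l f - lsum l g.
Proof. induction l as [|a l IH]; [unfold lsum|rewrite !lsum_cons, IH]; simpl; lra. Qed.

Lemma lsum_scal {A} (l : list A) c (f : A -> R) : lsum l (fun x => c * f x) = c * lsum l f.
Proof. induction l as [|a l IH]; [unfold lsum|rewrite !lsum_cons, IH]; simpl; lra. Qed.

Lemma lsum_eq0 {A} (l : list A) (f : A -> R) : (forall x, In x l -> f x = 0) -> lsum l f = 0.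
Proof.
  induction l as [|a l IHl]; intros H; auto.
  rewrite lsum_cons, (H a) by now left.
  rewrite IHl; [lra|]; intros x Hx; apply H; now right.
Qed.

Lemma lsum_le {A} (l : list A) (f g : A -> R) : (forall x, In x l -> f x <= g x) -> lsum l f <= lsum l g.
Proof.
  induction l as [|a l IHl]; intros H; [unfold lsum; simpl; lra|].
  rewrite !lsum_cons; apply Rplus_le_compat; [apply H; now left|].
  apply IHl; intros x Hx; apply H; now right.
Qed.

Lemma lsum_const {A} (l : list A) c : lsum l (fun _ => c) = INR (length l) * c.
Proof.
  induction l; [unfold lsum; simpl; lra|].
  rewrite lsum_cons, IHl; cbn [length]; rewrite S_INR; lra.
Qed.

Lemma lsum_ge0 {A} (l : list A) (f : A -> R) : (forall x, In x l -> 0 <= f x) -> 0 <= lsum l f.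
Proof.
  intros H; apply Rle_trans with (lsum l (fun _ => 0)).
  - rewrite lsum_const; lra.
  - now apply lsum_le.
Qed.

Lemma lsum_swap {A B} (l : list A) (l' : list B) (F : A -> B -> R) :
  lsum l (fun a => lsum l' (fun b => F a b)) = lsum l' (fun b => lsum l (fun a => F a b)).
Proof.
  induction l as [|a l IHl]; simpl.
  - symmetry; now apply lsum_eq0.
  - rewrite lsum_cons, IHl, <- lsum_add.
    apply lsum_ext_in; intros; now rewrite lsum_cons.
Qed.

Lemma le_lsum_abs {A} (l : list A) (f : A -> R) x : In x l -> f x <= lsum l (fun z => Rabs (f z)).
Proof.
  induction l as [|a l IHl]; [contradiction|]; rewrite lsum_cons; intros [<-|H].
  - pose proof (lsum_ge0 l (fun z => Rabs (f z)) (fun z _ => Rabs_pos (f z))).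
    pose proof (Rle_abs (f a)); lra.
  - pose proof (IHl H); pose proof (Rabs_pos (f a)); lra.
Qed.

Lemma length_filter_lsum {A} (p : A -> bool) (l : list A) :
  INR (length (filter p l)) = lsum l (fun z => if p z then 1 else 0).
Proof.
  induction l as [|a l IHl]; [reflexivity|].
  rewrite lsum_cons; simpl filter; destruct (p a); [cbn [length]; rewrite S_INR|]; lra.
Qed.

Ltac decide_nat_tests := repeat (match goal with
 | |- context [Nat.eqb ?a ?b] => first [ rewrite (proj2 (Nat.eqb_eq a b)) by lia
                                       | rewrite (proj2 (Nat.eqb_neq a b)) by lia
                                       | destruct (Nat.eqb_spec a b) ]
 | |- context [Nat.leb ?a ?b] => first [ rewrite (proj2 (Nat.leb_le a b)) by lia
                                       | rewrite (proj2 (Nat.leb_gt a b)) by lia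
                                       | destruct (Nat.leb_spec a b) ]
 | |- context [Nat.ltb ?a ?b] => first [ rewrite (proj2 (Nat.ltb_lt a b)) by lia
                                       | rewrite (proj2 (Nat.ltb_ge a b)) by lia
                                       | destruct (Nat.ltb_spec a b) ]
 end; cbn [andb orb negb] in *; try (exfalso; lia)).

Lemma lsum_seq_indicator a len c (F : nat -> R) :
  lsum (seq a len) (fun n => if Nat.eqb n c then F n else 0) =
  if andb (Nat.leb a c) (Nat.ltb c (a + len)) then F c else 0.
Proof.
  revert a; induction len; intros a; simpl.
  - decide_nat_tests; auto.
  - rewrite lsum_cons, IHlen; decide_nat_tests; subst; lra.
Qed.

(** * The graph G_k *)

Section Graph.
Variable k : nat.
Local Open Scope nat_scope.

(* The pairs listed in [edges k], oriented away from a along each path. *)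
Definition dedge (u w : V) : bool :=
  match u, w with
  | VA, VB => Nat.eqb (msq k) 0
  | VA, VP i => Nat.eqb i 1 && Nat.leb 1 (msq k)
  | VP i, VP i' => Nat.eqb i' (i+1) && Nat.leb 1 i && Nat.leb (i+1) (msq k)
  | VP i, VB => Nat.eqb i (msq k) && Nat.leb 1 (msq k)
  | VA, VI i c t => Nat.eqb t 1 && Nat.leb 1 i && Nat.leb i (msq k) && Nat.leb 1 c && Nat.leb c k
  | VI i c t, VI i' c' t' => Nat.eqb i' i && Nat.eqb c' c && Nat.eqb t' (t+1) && Nat.leb 1 t
        && Nat.leb (t+1) i && Nat.leb i (msq k) && Nat.leb 1 c && Nat.leb c k
  | VI i c t, VP i' => Nat.eqb i' i && Nat.eqb t i && Nat.leb 1 i && Nat.leb i (msq k)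
        && Nat.leb 1 c && Nat.leb c k
  | _, _ => false
  end%bool.

Lemma pnode_cases i : (i = 0 /\ pnode k i = VA) \/ (i = msq k + 1 /\ pnode k i = VB)
  \/ (i <> 0 /\ i <> msq k + 1 /\ pnode k i = VP i).
Proof. unfold pnode; decide_nat_tests; auto. Qed.

Lemma qnode_cases i c t : (t = 0 /\ qnode i c t = VA) \/ (t = i + 1 /\ qnode i c t = VP i)
  \/ (t <> 0 /\ t <> i + 1 /\ qnode i c t = VI i c t).
Proof. unfold qnode; decide_nat_tests; auto. Qed.

Local Ltac solve_dedge := cbn [dedge]; rewrite ?Bool.andb_true_iff, ?Nat.eqb_eq, ?Nat.leb_le; lia.
Local Ltac solve_node := try lia; unfold pnode, qnode; decide_nat_tests; auto; try lia; try (f_equal; lia).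

Lemma In_edges u w : In (u, w) (edges k) <-> dedge u w = true.
Proof.
  unfold edges; rewrite in_app_iff; split.
  - intros [H|H].
    + apply in_map_iff in H as [i [Hi Hs]]; apply in_seq in Hs.
      destruct (pnode_cases i) as [[? E1]|[[? E1]|[? [? E1]]]];
      destruct (pnode_cases (S i)) as [[? E2]|[[? E2]|[? [? E2]]]];
      rewrite E1, E2 in Hi; inversion Hi; subst; try lia; solve_dedge.
    + apply in_flat_map in H as [i [Hi H]]; apply in_seq in Hi.
      apply in_flat_map in H as [c [Hc H]]; apply in_seq in Hc.
      apply in_map_iff in H as [t [Ht Hs]]; apply in_seq in Hs.
      destruct (qnode_cases i c t) as [[? E1]|[[? E1]|[? [? E1]]]];
      destruct (qnode_cases i c (S t)) as [[? E2]|[[? E2]|[? [? E2]]]];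
      rewrite E1, E2 in Ht; inversion Ht; subst; try lia; solve_dedge.
  - intros H.
    assert (Hp : forall i, i <= msq k -> pnode k i = u -> pnode k (S i) = w ->
      In (u, w) (map (fun i => (pnode k i, pnode k (S i))) (seq 0 (msq k + 1)))).
    { intros i Hi E1 E2; apply in_map_iff; exists i; rewrite E1, E2.
      split; auto; apply in_seq; lia. }
    assert (Hq : forall i c t, 1 <= i <= msq k -> 1 <= c <= k -> t <= i ->
       qnode i c t = u -> qnode i c (S t) = w ->
       In (u, w) (flat_map (fun i => flat_map (fun c =>
         map (fun t => (qnode i c t, qnode i c (S t))) (seq 0 (i + 1))) (seq 1 k)) (seq 1 (msq k)))).
    { intros i c t Hi Hc Ht E1 E2.
      apply in_flat_map; exists i; split; [apply in_seq; lia|].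
      apply in_flat_map; exists c; split; [apply in_seq; lia|].
      apply in_map_iff; exists t; rewrite E1, E2; split; auto; apply in_seq; lia. }
    destruct u as [| |i|i c t]; destruct w as [| |i'|i' c' t']; cbn [dedge] in H;
      try discriminate; rewrite ?Bool.andb_true_iff, ?Nat.eqb_eq, ?Nat.leb_le in H.
    + left; apply (Hp 0); solve_node.
    + left; apply (Hp 0); solve_node.
    + right; apply (Hq i' c' 0); solve_node.
    + left; apply (Hp (msq k)); solve_node.
    + left; apply (Hp i); solve_node.
    + right; apply (Hq i c t); solve_node.
    + right; apply (Hq i c t); solve_node.
Qed.

Lemma V_eqb_eq a b : V_eqb a b = true <-> a = b.
Proof. unfold V_eqb; destruct (V_eq_dec a b); split; congruence. Qed.

Lemma adj_dedge x z : adj k x z = (dedge x z || dedge z x)%bool.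
Proof.
  apply Bool.eq_iff_eq_true; unfold adj.
  rewrite existsb_exists, Bool.orb_true_iff, <- !In_edges; split.
  - intros [[a b] [Hin Hp]]; simpl in Hp.
    rewrite Bool.orb_true_iff, !Bool.andb_true_iff, !V_eqb_eq in Hp.
    destruct Hp as [[-> ->]|[-> ->]]; auto.
  - intros [H|H]; [exists (x, z)|exists (z, x)]; split; auto; simpl;
      rewrite Bool.orb_true_iff, !Bool.andb_true_iff, !V_eqb_eq; auto.
Qed.

Lemma sumV_expand f : sumV k f = (f VA + f VB + lsum (seq 1 (msq k)) (fun i => f (VP i)) +
  lsum (seq 1 (msq k)) (fun i => lsum (seq 1 k) (fun c => lsum (seq 1 i) (fun t => f (VI i c t)))))%R.
Proof.
  change (sumV k f) with (lsum (verts k) f); unfold verts.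
  rewrite !lsum_cons, lsum_app, lsum_map, lsum_flat_map, !Rplus_assoc.
  do 3 f_equal; apply lsum_ext_in; intros i _.
  rewrite lsum_flat_map; apply lsum_ext_in; intros c _; now rewrite lsum_map.
Qed.

Lemma In_verts x : In x (verts k) -> x = VA \/ x = VB \/
  (exists i, x = VP i /\ 1 <= i <= msq k) \/
  (exists i c t, x = VI i c t /\ 1 <= i <= msq k /\ 1 <= c <= k /\ 1 <= t <= i).
Proof.
  unfold verts; intros [H|[H|H]]; auto; apply in_app_iff in H as [H|H].
  - apply in_map_iff in H as [i [<- Hi]]; apply in_seq in Hi.
    right; right; left; exists i; split; auto; lia.
  - apply in_flat_map in H as [i [Hi H]]; apply in_seq in Hi.
    apply in_flat_map in H as [c [Hc H]]; apply in_seq in Hc.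
    apply in_map_iff in H as [t [<- Ht]]; apply in_seq in Ht.
    right; right; right; exists i, c, t; repeat split; lia.
Qed.

Definition spine_vertex (w : V) : Prop :=
  w = VA \/ w = VB \/ exists i, w = VP i /\ 1 <= i <= msq k.

Lemma spine_vertex_pnode i : i <= msq k + 1 -> spine_vertex (pnode k i).
Proof.
  intros Hi; unfold spine_vertex, pnode; decide_nat_tests; auto.
  right; right; exists i; split; auto; lia.
Qed.

Lemma sumV_indicator w F : spine_vertex w ->
  sumV k (fun z => if V_eq_dec z w then F z else 0%R) = F w.
Proof.
  intros Hw; rewrite sumV_expand.
  rewrite (lsum_eq0 (seq 1 (msq k)) (fun i => lsum (seq 1 k) (fun c => lsum (seq 1 i)
    (fun t => if V_eq_dec (VI i c t) w then F (VI i c t) else 0%R)))).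
  2:{ intros i _; apply lsum_eq0; intros c _; apply lsum_eq0; intros t _.
      destruct V_eq_dec; auto; exfalso; destruct Hw as [->|[->|[? [-> _]]]]; discriminate. }
  rewrite (lsum_ext_in _ _ (fun i => if Nat.eqb i (match w with VP i => i | _ => 0 end)
    then F w else 0%R)).
  2:{ intros i Hi; apply in_seq in Hi.
      destruct Hw as [->|[->|[i0 [-> _]]]]; destruct V_eq_dec as [E|E];
        decide_nat_tests; subst; try congruence; inversion E; lia. }
  rewrite lsum_seq_indicator.
  destruct Hw as [->|[->|[i [-> Hi]]]]; repeat destruct V_eq_dec; try congruence;
    decide_nat_tests; lra.
Qed.

Definition nbr_sum (x : V) (h : V -> R) : R :=
  sumV k (fun z => if adj k x z then h z else 0%R).

Lemma nbr_sum_dedge x h :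
  nbr_sum x h = sumV k (fun z => if (dedge x z || dedge z x)%bool then h z else 0%R).
Proof.
  apply (lsum_ext_in (verts k)); intros; now rewrite adj_dedge.
Qed.

Lemma nbr_sum_VB h : nbr_sum VB h = h (pnode k (msq k)).
Proof.
  rewrite nbr_sum_dedge, sumV_expand; cbn [dedge orb].
  rewrite (lsum_eq0 (seq 1 (msq k)) (fun i => lsum (seq 1 k) (fun c => lsum (seq 1 i) (fun t => 0)%R))).
  2:{ intros i _; apply lsum_eq0; intros c _; now apply lsum_eq0. }
  rewrite (lsum_ext_in _ _ (fun i => if Nat.eqb i (msq k) then h (VP i) else 0%R)).
  2:{ intros i Hi; apply in_seq in Hi; decide_nat_tests; auto. }
  rewrite lsum_seq_indicator; unfold pnode; decide_nat_tests; lra.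
Qed.

Lemma nbr_sum_VP i h : 1 <= i <= msq k -> nbr_sum (VP i) h =
  (h (pnode k (i - 1)) + h (pnode k (i + 1)) + lsum (seq 1 k) (fun c => h (VI i c i)))%R.
Proof.
  intros Hi; rewrite nbr_sum_dedge, sumV_expand; cbn [dedge orb].
  rewrite (lsum_ext_in _ _ (fun i0 => (if Nat.eqb i0 (i + 1) then h (VP i0) else 0) +
     (if Nat.eqb i0 (i - 1) then h (VP i0) else 0))%R).
  2:{ intros i0 Hi0; apply in_seq in Hi0; decide_nat_tests; lra. }
  rewrite lsum_add, !lsum_seq_indicator.
  rewrite (lsum_ext_in _ _ (fun i0 =>
    if Nat.eqb i0 i then lsum (seq 1 k) (fun c => h (VI i0 c i0)) else 0%R)).
  2:{ intros i0 Hi0; apply in_seq in Hi0; destruct (Nat.eqb_spec i0 i).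
      - subst; apply lsum_ext_in; intros c Hc; apply in_seq in Hc.
        rewrite (lsum_ext_in _ _ (fun t => if Nat.eqb t i then h (VI i c t) else 0%R)).
        + rewrite lsum_seq_indicator; decide_nat_tests; lra.
        + intros t Ht; apply in_seq in Ht; decide_nat_tests; lra.
      - apply lsum_eq0; intros c _; apply lsum_eq0; intros t _; decide_nat_tests; lra. }
  rewrite lsum_seq_indicator; unfold pnode; decide_nat_tests; lra.
Qed.

Lemma nbr_sum_VI i c t h : 1 <= i <= msq k -> 1 <= c <= k -> 1 <= t <= i ->
  nbr_sum (VI i c t) h = (h (qnode i c (t - 1)) + h (qnode i c (t + 1)))%R.
Proof.
  intros Hi Hc Ht; rewrite nbr_sum_dedge, sumV_expand; cbn [dedge orb].
  rewrite (lsum_ext_in _ _ (fun i0 =>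
    if Nat.eqb i0 i then (if Nat.eqb t i then h (VP i0) else 0) else 0)%R).
  2:{ intros i0 Hi0; apply in_seq in Hi0; decide_nat_tests; lra. }
  rewrite lsum_seq_indicator.
  rewrite (lsum_ext_in _ _ (fun i0 => if Nat.eqb i0 i then
       lsum (seq 1 k) (fun c0 => if Nat.eqb c0 c then
           lsum (seq 1 i0) (fun t0 => (if Nat.eqb t0 (t + 1) then h (VI i0 c0 t0) else 0)
                + (if Nat.eqb t0 (t - 1) then h (VI i0 c0 t0) else 0))%R else 0%R) else 0%R)).
  2:{ intros i0 Hi0; apply in_seq in Hi0; destruct (Nat.eqb_spec i0 i).
      - subst; apply lsum_ext_in; intros c0 Hc0; apply in_seq in Hc0.
        destruct (Nat.eqb_spec c0 c).
        + subst; apply lsum_ext_in; intros t0 Ht0; apply in_seq in Ht0; decide_nat_tests; lra.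
        + apply lsum_eq0; intros t0 _; decide_nat_tests; lra.
      - apply lsum_eq0; intros c0 _; apply lsum_eq0; intros t0 _; decide_nat_tests; lra. }
  rewrite lsum_seq_indicator, (lsum_seq_indicator 1 k c), lsum_add, !lsum_seq_indicator.
  unfold qnode; decide_nat_tests; lra.
Qed.

Lemma deg_VB : INR (length (nbrs k VB)) = 1%R.
Proof. unfold nbrs; rewrite length_filter_lsum; apply (nbr_sum_VB (fun _ => 1%R)). Qed.

Lemma deg_VP i : 1 <= i <= msq k -> INR (length (nbrs k (VP i))) = (INR k + 2)%R.
Proof.
  intros Hi; unfold nbrs; rewrite length_filter_lsum.
  change (nbr_sum (VP i) (fun _ => 1%R) = (INR k + 2)%R).
  rewrite nbr_sum_VP, lsum_const, length_seq by auto; lra.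
Qed.

Lemma deg_VI i c t : 1 <= i <= msq k -> 1 <= c <= k -> 1 <= t <= i ->
  INR (length (nbrs k (VI i c t))) = 2%R.
Proof.
  intros; unfold nbrs; rewrite length_filter_lsum.
  change (nbr_sum (VI i c t) (fun _ => 1%R) = 2%R); rewrite nbr_sum_VI by auto; lra.
Qed.

End Graph.

(** * Bounds on hitting times from sub- and supersolutions *)

Section KilledWalk.
Variables (k : nat) (y : V).
Hypothesis y_ne_VA : y <> VA.

Definition step_op (h : V -> R) (x : V) : R :=
  sumV k (fun z => if V_eq_dec z y then 0 else P k x z * h z).

Definition supersolution (g : V -> R) : Prop :=
  forall x, In x (verts k) -> x <> y -> step_op g x <= g x - 1.

Definition subsolution (f : V -> R) : Prop :=
  forall x, In x (verts k) -> x <> y -> step_op f x >= f x - 1.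

(* E[h(X_n); tau_y > n] for the walk started at a. *)
Definition killed_mean (n : nat) (h : V -> R) : R :=
  sumV k (fun x => qdist k VA y n x * h x).

Lemma P_ge0 x z : 0 <= P k x z.
Proof.
  unfold P; destruct V_eq_dec; [destruct V_eq_dec; lra|].
  destruct adj; [|lra].
  destruct (Rle_lt_or_eq_dec _ _ (pos_INR (length (nbrs k x)))) as [Hd|Hd].
  - now apply Rlt_le, Rinv_0_lt_compat.
  - rewrite <- Hd, Rinv_0; lra.
Qed.

Lemma qdist_ge0 n x : 0 <= qdist k VA y n x.
Proof.
  revert x; induction n; intros x; cbn [qdist].
  - repeat destruct V_eq_dec; lra.
  - destruct V_eq_dec; [lra|]; apply lsum_ge0; intros z _.
    apply Rmult_le_pos; auto; apply P_ge0.
Qed.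

Lemma qdist_target n : qdist k VA y n y = 0.
Proof. destruct n; cbn [qdist]; repeat destruct V_eq_dec; congruence. Qed.

Lemma survival_ge0 n : 0 <= survival k VA y n.
Proof. apply lsum_ge0; intros; apply qdist_ge0. Qed.

Lemma killed_mean_0 h : killed_mean 0 h = h VA.
Proof.
  unfold killed_mean; cbn [qdist]; destruct (V_eq_dec VA y); [congruence|].
  rewrite <- (sumV_indicator k VA h) by (left; reflexivity).
  apply (lsum_ext_in (verts k)); intros; destruct V_eq_dec; ring.
Qed.

Lemma killed_mean_succ n h : killed_mean (S n) h = killed_mean n (step_op h).
Proof.
  unfold killed_mean, step_op; cbn [qdist].
  change (lsum (verts k) (fun z => (if V_eq_dec z y then 0
            else lsum (verts k) (fun x => qdist k VA y n x * P k x z)) * h z)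
    = lsum (verts k) (fun x => qdist k VA y n x *
            lsum (verts k) (fun z => if V_eq_dec z y then 0 else P k x z * h z))).
  rewrite (lsum_ext_in _ _ (fun z => lsum (verts k) (fun x =>
    if V_eq_dec z y then 0 else qdist k VA y n x * P k x z * h z))).
  2:{ intros z _; destruct V_eq_dec; [rewrite lsum_eq0; auto; ring|].
      rewrite Rmult_comm, <- lsum_scal; apply lsum_ext_in; intros; ring. }
  rewrite lsum_swap; apply lsum_ext_in; intros x _; rewrite <- lsum_scal.
  apply lsum_ext_in; intros z _; destruct V_eq_dec; ring.
Qed.

Lemma killed_mean_super g n : supersolution g ->
  killed_mean (S n) g <= killed_mean n g - survival k VA y n.
Proof.
  intros Hg; rewrite killed_mean_succ; unfold killed_mean, survival, sumV.
  fold (lsum (verts k) (qdist k VA y n)).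
  fold (lsum (verts k) (fun x => qdist k VA y n x * g x)).
  fold (lsum (verts k) (fun x => qdist k VA y n x * step_op g x)).
  rewrite <- lsum_sub; apply lsum_le; intros x Hx.
  destruct (V_eq_dec x y) as [->|Hxy]; [rewrite qdist_target; lra|].
  specialize (Hg x Hx Hxy); pose proof (qdist_ge0 n x); nra.
Qed.

Lemma killed_mean_sub f n : subsolution f ->
  killed_mean (S n) f >= killed_mean n f - survival k VA y n.
Proof.
  intros Hf; rewrite killed_mean_succ; unfold killed_mean, survival, sumV.
  fold (lsum (verts k) (qdist k VA y n)).
  fold (lsum (verts k) (fun x => qdist k VA y n x * f x)).
  fold (lsum (verts k) (fun x => qdist k VA y n x * step_op f x)).
  rewrite <- lsum_sub; apply Rle_ge, lsum_le; intros x Hx.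
  destruct (V_eq_dec x y) as [->|Hxy]; [rewrite qdist_target; lra|].
  specialize (Hf x Hx Hxy); pose proof (qdist_ge0 n x); nra.
Qed.

Lemma killed_mean_ge0 n g : (forall x, In x (verts k) -> 0 <= g x) -> 0 <= killed_mean n g.
Proof. intros Hg; apply lsum_ge0; intros x Hx; apply Rmult_le_pos; auto; apply qdist_ge0. Qed.

Lemma killed_mean_le n f :
  killed_mean n f <= sumV k (fun z => Rabs (f z)) * survival k VA y n.
Proof.
  unfold killed_mean, survival, sumV.
  fold (lsum (verts k) (qdist k VA y n)); fold (lsum (verts k) (fun z => Rabs (f z))).
  rewrite <- lsum_scal; apply lsum_le; intros x Hx.
  pose proof (le_lsum_abs (verts k) f x Hx); pose proof (qdist_ge0 n x); nra.
Qed.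

Lemma survival_partial_sum_le g : supersolution g ->
  forall N, sum_f_R0 (survival k VA y) N <= g VA - killed_mean (S N) g.
Proof.
  intros Hg N; pose proof (killed_mean_super g N Hg).
  induction N; simpl; [rewrite killed_mean_0 in H|pose proof (killed_mean_super g N Hg)]; lra.
Qed.

Lemma survival_partial_sum_ge f : subsolution f ->
  forall N, sum_f_R0 (survival k VA y) N >= f VA - killed_mean (S N) f.
Proof.
  intros Hf N; pose proof (killed_mean_sub f N Hf).
  induction N; simpl; [rewrite killed_mean_0 in H|pose proof (killed_mean_sub f N Hf)]; lra.
Qed.

Lemma Un_cv_const c : Un_cv (fun _ => c) c.
Proof. intros eps Heps; exists 0%nat; intros; unfold Rdist; rewrite Rminus_diag, Rabs_R0; auto. Qed.

Lemma Un_cv_succ u l : Un_cv u l -> Un_cv (fun n => u (S n)) l.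
Proof. intros H eps Heps; destruct (H eps Heps) as [N HN]; exists N; intros; apply HN; lia. Qed.

(* The supersolution bounds the (increasing) partial sums, so the series
   converges; its terms then tend to 0, which kills the error term of the
   subsolution bound. *)
Lemma ExpHit_ge_subsolution g f :
  (forall x, In x (verts k) -> 0 <= g x) -> supersolution g -> subsolution f ->
  exists T, ExpHit k VA y T /\ f VA <= T.
Proof.
  intros Hg0 Hg Hf; set (partial := sum_f_R0 (survival k VA y)).
  assert (HS_grow : Un_growing partial).
  { intros n; unfold partial; simpl; pose proof (survival_ge0 (S n)); lra. }
  assert (HS_ub : has_ub partial).
  { exists (g VA); intros x [N ->].
    pose proof (survival_partial_sum_le g Hg N); pose proof (killed_mean_ge0 (S N) g Hg0).
    unfold partial; lra. }
  destruct (growing_cv partial HS_grow HS_ub) as [T HT]; exists T; split; [exact HT|].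
  set (M := sumV k (fun z => Rabs (f z))).
  assert (Hlow : forall N, f VA - M * (partial (S N) - partial N) <= partial N).
  { intros N; pose proof (survival_partial_sum_ge f Hf N) as Hsub.
    pose proof (killed_mean_le (S N) f) as Herr; fold M in Herr.
    replace (partial (S N) - partial N) with (survival k VA y (S N)) by (unfold partial; simpl; ring).
    unfold partial; lra. }
  assert (Hcv : Un_cv (fun N => f VA - M * (partial (S N) - partial N)) (f VA - M * (T - T))).
  { apply CV_minus; [apply Un_cv_const|]; apply CV_mult; [apply Un_cv_const|].
    apply CV_minus; [apply Un_cv_succ|]; exact HT. }
  pose proof (Rle_cv_lim Hlow Hcv HT) as Hlim; lra.
Qed.

End KilledWalk.

(** * The hitting times along the spine *)

(* [spine_time k i] is T(a, v_i). *)
Fixpoint spine_time (k n : nat) : R :=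
  match n with
  | O => 0
  | S O => 1
  | S (S p as m) => 2 * spine_time k m - spine_time k p + (INR k + 2) + INR k * INR m
                    + INR k * spine_time k m / (INR m + 1)
  end.

Lemma INR_succ_gt0 n : 0 < INR n + 1.
Proof. pose proof (pos_INR n); lra. Qed.

Lemma spine_time_incr k n : spine_time k (S n) - spine_time k n >= 1 /\ spine_time k n >= 0.
Proof.
  induction n as [|n [IH1 IH2]]; [simpl; lra|].
  change (spine_time k (S (S n))) with (2 * spine_time k (S n) - spine_time k n + (INR k + 2)
    + INR k * INR (S n) + INR k * spine_time k (S n) / (INR (S n) + 1)).
  pose proof (pos_INR k); pose proof (pos_INR (S n)).
  assert (0 <= INR k * spine_time k (S n) / (INR (S n) + 1)).
  { apply Rle_mult_inv_pos; [apply Rmult_le_pos; lra|apply INR_succ_gt0]. }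
  assert (0 <= INR k * INR (S n)) by (apply Rmult_le_pos; auto).
  lra.
Qed.

Lemma spine_time_ge0 k n : 0 <= spine_time k n.
Proof. destruct (spine_time_incr k n); lra. Qed.

Lemma spine_time_mono k a b : (a <= b)%nat -> spine_time k a <= spine_time k b.
Proof. induction 1; [lra|]; destruct (spine_time_incr k m); lra. Qed.

Lemma spine_time_ge_fact k n : spine_time k (S n) >= INR k ^ n / INR (fact (S n)).
Proof.
  induction n as [|n IH]; [simpl; lra|].
  assert (Hstep : spine_time k (S (S n)) >= INR k * spine_time k (S n) / (INR (S n) + 1)).
  { change (spine_time k (S (S n))) with (2 * spine_time k (S n) - spine_time k n
      + (INR k + 2) + INR k * INR (S n) + INR k * spine_time k (S n) / (INR (S n) + 1)).
    destruct (spine_time_incr k n); pose proof (pos_INR k); pose proof (pos_INR (S n)).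
    assert (0 <= INR k * INR (S n)) by (apply Rmult_le_pos; auto); lra. }
  assert (Hfact : INR (fact (S (S n))) = (INR (S n) + 1) * INR (fact (S n))).
  { change (fact (S (S n))) with (S (S n) * fact (S n))%nat; rewrite mult_INR, (S_INR (S n)); ring. }
  apply Rge_trans with (1 := Hstep), Rle_ge.
  rewrite Hfact; unfold Rdiv; rewrite Rinv_mult; simpl pow.
  apply Rle_trans with (INR k * (INR k ^ n * / INR (fact (S n))) * / (INR (S n) + 1));
    [right; ring|].
  apply Rmult_le_compat_r; [apply Rlt_le, Rinv_0_lt_compat, INR_succ_gt0|].
  apply Rmult_le_compat_l; [apply pos_INR|apply Rge_le, IH].
Qed.

Lemma INR_succ_le_pow4 n : INR (S n) <= 4 ^ n.
Proof.
  induction n; [simpl; lra|]; rewrite !S_INR in *; simpl pow.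
  pose proof (pow_le 4 n); pose proof (pos_INR n); lra.
Qed.

Lemma spine_time_ge k j : (1 <= j)%nat ->
  spine_time k j >= INR k ^ (j - 1) / (4 ^ (j - 1) * INR (fact (j - 1))).
Proof.
  intros Hj; destruct j as [|n]; [lia|]; replace (S n - 1)%nat with n by lia.
  apply Rge_trans with (1 := spine_time_ge_fact k n), Rle_ge.
  change (fact (S n)) with (S n * fact n)%nat; rewrite mult_INR.
  pose proof (INR_fact_lt_0 n); pose proof (INR_succ_le_pow4 n).
  pose proof (lt_0_INR (S n) (Nat.lt_0_succ n)); pose proof (pow_le (INR k) n (pos_INR k)).
  unfold Rdiv; apply Rmult_le_compat_l; auto.
  apply Rinv_le_contravar; [apply Rmult_lt_0_compat; auto|apply Rmult_le_compat_r; lra].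
Qed.

(** * Sub- and supersolutions for the target v_j *)

Section Potentials.
Variables (k j : nat).
Hypothesis j_range : (1 <= j <= msq k + 1)%nat.

(* Up to v_j these are the exact hitting times T(v_i, v_j), interpolated along
   each added path as gambler's ruin plus the exit time t(i + 1 - t).  Past v_j,
   [super = true] puts values large enough for a supersolution and
   [super = false] puts 0, which gives a subsolution. *)
Definition spine_pot (super : bool) (i : nat) : R :=
  if Nat.leb i j then spine_time k j - spine_time k i
  else if super then spine_time k j + (INR (msq k) + 3) ^ 2 + INR i else 0.

Definition pot (super : bool) (x : V) : R :=
  match x with
  | VA => spine_time k j
  | VB => spine_pot super (msq k + 1)
  | VP i => spine_pot super i
  | VI i c t => spine_time k j + (spine_pot super i - spine_time k j) * INR t / (INR i + 1)
                + INR t * (INR i + 1 - INR t)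
  end.

Lemma spine_pot_ge0 super i : 0 <= spine_pot super i.
Proof.
  unfold spine_pot; decide_nat_tests.
  - pose proof (spine_time_mono k i j ltac:(lia)); lra.
  - destruct super; [|lra].
    pose proof (spine_time_ge0 k j); pose proof (pos_INR i).
    pose proof (pow2_ge_0 (INR (msq k) + 3)); lra.
Qed.

Lemma pot_pnode super i : (i <= msq k + 1)%nat -> pot super (pnode k i) = spine_pot super i.
Proof.
  intros; unfold pnode; decide_nat_tests; subst; simpl pot; auto.
  unfold spine_pot; decide_nat_tests; simpl; ring.
Qed.

Lemma pot_qnode super i c t : (t <= i + 1)%nat -> pot super (qnode i c t) =
  spine_time k j + (spine_pot super i - spine_time k j) * INR t / (INR i + 1)
  + INR t * (INR i + 1 - INR t).
Proof.
  intros; pose proof (INR_succ_gt0 i); unfold qnode; decide_nat_tests; subst; simpl pot; auto.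
  - simpl INR; field; lra.
  - rewrite plus_INR; simpl INR; field; lra.
Qed.

Lemma pot_target super : pot super (pnode k j) = 0.
Proof. rewrite pot_pnode by lia; unfold spine_pot; decide_nat_tests; ring. Qed.

Lemma pot_ge0 super x : In x (verts k) -> 0 <= pot super x.
Proof.
  intros Hx; apply In_verts in Hx as [->|[->|[[i [-> _]]|[i [c [t [-> [Hi [Hc Ht]]]]]]]]];
    simpl pot; try apply spine_pot_ge0; [apply Rge_le, spine_time_incr|].
  pose proof (spine_pot_ge0 super i); pose proof (spine_time_ge0 k j).
  pose proof (INR_succ_gt0 i); pose proof (pos_INR t).
  assert (INR t <= INR i) by (apply le_INR; lia).
  assert (Hfrac : 0 <= INR t / (INR i + 1) <= 1).
  { split; [apply Rle_mult_inv_pos; lra|].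
    apply Rmult_le_reg_r with (INR i + 1); auto.
    unfold Rdiv; rewrite Rmult_assoc, Rinv_l by lra; lra. }
  replace ((spine_pot super i - spine_time k j) * INR t / (INR i + 1))
    with ((spine_pot super i - spine_time k j) * (INR t / (INR i + 1))) by (unfold Rdiv; ring).
  nra.
Qed.

Lemma step_op_VA (h : V -> R) : h (pnode k j) = 0 -> step_op k (pnode k j) h VA = h (pnode k 1).
Proof.
  intros Hy; unfold step_op, P; destruct (V_eq_dec VA VA); [|congruence].
  rewrite <- (sumV_indicator k (pnode k 1) h) by (apply spine_vertex_pnode; lia).
  apply (lsum_ext_in (verts k)); intros z _.
  repeat destruct V_eq_dec; subst; rewrite ?Hy; ring.
Qed.

Lemma step_op_other (h : V -> R) x : x <> VA -> h (pnode k j) = 0 ->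
  step_op k (pnode k j) h x = nbr_sum k x h / INR (length (nbrs k x)).
Proof.
  intros Hx Hy; unfold step_op, nbr_sum, P; destruct (V_eq_dec x VA); [congruence|].
  unfold Rdiv; rewrite Rmult_comm; unfold sumV.
  fold (lsum (verts k) (fun z => if adj k x z then h z else 0)).
  rewrite <- lsum_scal; apply lsum_ext_in; intros z _.
  destruct V_eq_dec; subst; [rewrite Hy; destruct adj|destruct adj]; ring.
Qed.

Lemma step_pot_VA super : step_op k (pnode k j) (pot super) VA = pot super VA - 1.
Proof.
  rewrite step_op_VA by apply pot_target; rewrite pot_pnode by lia.
  unfold spine_pot; decide_nat_tests; simpl; ring.
Qed.

Lemma step_pot_VI super i c t : (1 <= i <= msq k)%nat -> (1 <= c <= k)%nat -> (1 <= t <= i)%nat ->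
  step_op k (pnode k j) (pot super) (VI i c t) = pot super (VI i c t) - 1.
Proof.
  intros Hi Hc Ht; rewrite step_op_other by (discriminate || apply pot_target).
  rewrite nbr_sum_VI, deg_VI, !pot_qnode by lia; simpl pot.
  rewrite minus_INR, plus_INR by lia; simpl INR.
  pose proof (INR_succ_gt0 i); field; lra.
Qed.

(* This is the recurrence defining [spine_time]. *)
Lemma step_pot_VP_below super i : (1 <= i < j)%nat -> (i <= msq k)%nat ->
  step_op k (pnode k j) (pot super) (VP i) = pot super (VP i) - 1.
Proof.
  intros Hij Him; rewrite step_op_other by (discriminate || apply pot_target).
  rewrite nbr_sum_VP, deg_VP, !pot_pnode by lia; simpl pot.
  rewrite (lsum_ext_in _ _ (fun _ => pot super (VI i 1 i))) by reflexivity.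
  rewrite lsum_const, length_seq; simpl pot.
  destruct i as [|n]; [lia|]; replace (S n - 1)%nat with n by lia.
  replace (S n + 1)%nat with (S (S n)) by lia.
  unfold spine_pot; decide_nat_tests; cbn [spine_time].
  pose proof (INR_succ_gt0 (S n)); pose proof (pos_INR k); field; lra.
Qed.

Lemma step_pot_VP_above i : (j < i <= msq k)%nat ->
  step_op k (pnode k j) (pot true) (VP i) <= pot true (VP i) - 1.
Proof.
  intros Hi; rewrite step_op_other by (discriminate || apply pot_target).
  rewrite nbr_sum_VP, deg_VP, !pot_pnode by lia; simpl pot.
  rewrite (lsum_ext_in _ _ (fun _ => pot true (VI i 1 i))) by reflexivity.
  rewrite lsum_const, length_seq; simpl pot.
  assert (Hk : 1 <= INR k).
  { destruct k as [|k']; [change (msq 0) with 0%nat in Hi; lia|].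
    rewrite S_INR; pose proof (pos_INR k'); lra. }
  set (X := spine_time k j); set (I := INR i); set (M := INR (msq k)).
  assert (HX : 0 <= X) by apply spine_time_ge0.
  assert (HI : 1 <= I) by (apply (le_INR 1); lia).
  assert (HIM : I <= M) by (apply le_INR; lia).
  set (e := (M + 3) ^ 2 + I).
  assert (Hi0 : spine_pot true i = X + e) by (unfold spine_pot, e; decide_nat_tests; fold X M I; ring).
  assert (Hi1 : spine_pot true (i + 1) = X + e + 1).
  { unfold spine_pot, e; decide_nat_tests; fold X M; rewrite plus_INR; simpl INR; fold I; ring. }
  assert (Him1 : spine_pot true (i - 1) <= X + e - 1).
  { unfold spine_pot, e; decide_nat_tests.
    - replace (i - 1)%nat with j by lia; pose proof (pow2_ge_0 (M + 3)); fold X; lra.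
    - fold X M; rewrite minus_INR by lia; fold I; simpl INR; lra. }
  rewrite Hi0, Hi1.
  (* the k neighbours on added paths lie at least 3 below v_i; as k >= 1 this
     outweighs the +1 towards v_(i+1) *)
  set (r := e / (I + 1)).
  assert (Hr : r * (I + 1) = e) by (unfold r; field; lra).
  assert (Hr3 : r >= I + 3).
  { apply Rle_ge, Rmult_le_reg_r with (I + 1); [lra|]; rewrite Hr; unfold e; nra. }
  replace ((X + e - X) * I / (I + 1)) with (e - r) by (unfold r; field; lra).
  replace (I + 1 - I) with 1 by ring.
  apply Rmult_le_reg_r with (INR k + 2); [lra|].
  unfold Rdiv; rewrite Rmult_assoc, Rinv_l by lra; nra.
Qed.

Lemma step_pot_VB : (j <= msq k)%nat ->
  step_op k (pnode k j) (pot true) VB <= pot true VB - 1.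
Proof.
  intros Hj; rewrite step_op_other by (discriminate || apply pot_target).
  rewrite nbr_sum_VB, deg_VB, pot_pnode by lia; simpl pot; unfold spine_pot.
  pose proof (pow2_ge_0 (INR (msq k) + 3)); pose proof (spine_time_ge0 k j).
  pose proof (spine_time_ge0 k (msq k)); pose proof (pos_INR (msq k)).
  rewrite plus_INR; simpl INR; decide_nat_tests; lra.
Qed.

Lemma pnode_target : (j = msq k + 1 /\ pnode k j = VB)%nat \/ ((j <= msq k)%nat /\ pnode k j = VP j).
Proof. unfold pnode; decide_nat_tests; [left|right]; split; auto; lia. Qed.

Lemma pot_supersolution : supersolution k (pnode k j) (pot true).
Proof.
  intros x Hx Hxy; pose proof pnode_target as Hy.
  apply In_verts in Hx as [->|[->|[[i [-> Hi]]|[i [c [t [-> [Hi [Hc Ht]]]]]]]]].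
  - rewrite step_pot_VA; lra.
  - apply step_pot_VB; destruct Hy as [[_ E]|[? _]]; [congruence|lia].
  - destruct (lt_eq_lt_dec i j) as [[H|H]|H].
    + rewrite step_pot_VP_below by lia; lra.
    + subst; destruct Hy as [[? _]|[_ E]]; [lia|congruence].
    + apply step_pot_VP_above; lia.
  - rewrite step_pot_VI by lia; lra.
Qed.

Lemma pot_subsolution : subsolution k (pnode k j) (pot false).
Proof.
  intros x Hx Hxy; pose proof pnode_target as Hy.
  assert (Hstep : 0 <= step_op k (pnode k j) (pot false) x).
  { apply lsum_ge0; intros z Hz; destruct V_eq_dec; [lra|].
    apply Rmult_le_pos; [apply P_ge0|now apply pot_ge0]. }
  apply In_verts in Hx as [->|[->|[[i [-> Hi]]|[i [c [t [-> [Hi [Hc Ht]]]]]]]]].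
  - rewrite step_pot_VA; lra.
  - simpl pot; unfold spine_pot; destruct Hy as [[_ E]|[? _]]; [congruence|].
    decide_nat_tests; lra.
  - destruct (lt_eq_lt_dec i j) as [[H|H]|H].
    + rewrite step_pot_VP_below by lia; lra.
    + subst; destruct Hy as [[? _]|[_ E]]; [lia|congruence].
    + simpl pot; unfold spine_pot; decide_nat_tests; lra.
  - rewrite step_pot_VI by lia; lra.
Qed.

End Potentials.

Theorem mainTheorem3 (k j : nat) :
  (1 <= j <= msq k + 1)%nat ->
  exists T : R, ExpHit k VA (pnode k j) T /\
    T >= INR k ^ (j - 1) / (4 ^ (j - 1) * INR (fact (j - 1))).
Proof.
  intros Hj.
  assert (Hy : pnode k j <> VA) by (unfold pnode; decide_nat_tests; discriminate).
  destruct (ExpHit_ge_subsolution k (pnode k j) Hy (pot k j true) (pot k j false))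
    as [T [HT Hge]].
  - intros x Hx; now apply pot_ge0.
  - now apply pot_supersolution.
  - now apply pot_subsolution.
  - exists T; split; [exact HT|].
    pose proof (spine_time_ge k j ltac:(lia)); simpl pot in Hge; lra.
Qed.
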